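(* Under Rayleigh fading, for every target rate $r>0$, $P_{\rm r}>0$ and $\mathcal C_x\in[0,1)$, \[ \mathcal P_{\rm E-E}(P_{\rm r},\mathcal C_x)\le 1-\frac{\exp\!\left(-\left(\frac{\Psi_r(\mathcal C_x)}{P_{\rm r}\pi_{\rm rd}(1-\mathcal C_x^2)}+\frac{P_{\rm r}\pi_{\rm rr}+1}{P_{\rm s}\pi_{\rm sr}}\Psi_r(\alpha\mathcal C_x)\right)\right)}{P_{\rm s}\pi_{\rm sd}\frac{\Psi_r(\mathcal C_x)}{P_{\rm r}\pi_{\rm rd}(1-\mathcal C_x^2)}+1}=:\mathcal P^{\rm UB}_{\rm E-E,RF}(P_{\rm r},\mathcal C_x), \qquad\alpha=\frac{P_{\rm r}\pi_{\rm rr}}{P_{\rm r}\pi_{\rm rr}+1}. \]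
   Context: Let $P_{\rm s}>0$, $P_{\rm r}>0$ be the source and relay transmit powers. Rayleigh fading: $g_{\rm sr},g_{\rm rr},g_{\rm rd},g_{\rm sd}$ are mutually independent exponential random variables with means $\pi_{\rm sr},\pi_{\rm rr},\pi_{\rm rd},\pi_{\rm sd}>0$. For $\mathcal C_x\in[0,1)$ define $R_{\rm sr}(P_{\rm r},\mathcal C_x)=\tfrac12\log_2\frac{(P_{\rm s}g_{\rm sr}+P_{\rm r}g_{\rm rr}+1)^2-(P_{\rm r}g_{\rm rr}\mathcal C_x)^2}{(P_{\rm r}g_{\rm rr}+1)^2-(P_{\rm r}g_{\rm rr}\mathcal C_x)^2}$ and $R_{\rm rd}(P_{\rm r},\mathcal C_x)=\tfrac12\log_2\frac{(P_{\rm r}g_{\rm rd}+P_{\rm s}g_{\rm sd}+1)^2-(P_{\rm r}g_{\rm rd}\mathcal C_x)^2}{(P_{\rm s}g_{\rm sd}+1)^2}$. For a target rate $r>0$ put $\gamma=2^{2r}-1$ and $\Psi_r(x)=\sqrt{1+\gamma(1-x^2)}-1$. The end-to-end outage probability is $\mathcal P_{\rm E-E}=\mathbb P\{\min(R_{\rm sr},R_{\rm rd})<r\}$. *)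

From Stdlib Require Import Reals.
Open Scope R_scope.

Record prob_space := {
  ps_omega :> Type;
  ps_meas : (ps_omega -> Prop) -> Prop;
  ps_P : (ps_omega -> Prop) -> R;
  ps_meas_full : ps_meas (fun _ => True);
  ps_meas_compl : forall A, ps_meas A -> ps_meas (fun w => ~ A w);
  ps_meas_cunion : forall A : nat -> ps_omega -> Prop,
      (forall n, ps_meas (A n)) -> ps_meas (fun w => exists n, A n w);
  ps_P_nonneg : forall A, ps_meas A -> 0 <= ps_P A;
  ps_P_full : ps_P (fun _ => True) = 1;
  ps_P_sigma_additive : forall A : nat -> ps_omega -> Prop,
      (forall n, ps_meas (A n)) ->
      (forall m n w, m <> n -> A m w -> A n w -> False) ->
      infinite_sum (fun n => ps_P (A n)) (ps_P (fun w => exists n, A n w))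
}.

(* Real random variable: measurable w.r.t. the Borel sets (generated by
   the half-lines (-oo, t]). *)
Definition random_variable (S : prob_space) (X : S -> R) : Prop :=
  forall t, ps_meas S (fun w => X w <= t).

Definition exponential_rv (S : prob_space) (m : R) (X : S -> R) : Prop :=
  random_variable S X /\
  (forall t, t < 0 -> ps_P S (fun w => X w <= t) = 0) /\
  (forall t, 0 <= t -> ps_P S (fun w => X w <= t) = 1 - exp (- t / m)).

Definition mutually_independent4 (S : prob_space) (X1 X2 X3 X4 : S -> R) : Prop :=
  forall t1 t2 t3 t4,
    ps_P S (fun w => X1 w <= t1 /\ X2 w <= t2 /\ X3 w <= t3 /\ X4 w <= t4) =
    ps_P S (fun w => X1 w <= t1) * ps_P S (fun w => X2 w <= t2) *
    ps_P S (fun w => X3 w <= t3) * ps_P S (fun w => X4 w <= t4).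

Definition log2 (x : R) : R := ln x / ln 2.

Definition R_sr (Ps Pr Cx gsr grr : R) : R :=
  / 2 * log2 (((Ps * gsr + Pr * grr + 1) ^ 2 - (Pr * grr * Cx) ^ 2) /
              ((Pr * grr + 1) ^ 2 - (Pr * grr * Cx) ^ 2)).

Definition R_rd (Ps Pr Cx grd gsd : R) : R :=
  / 2 * log2 (((Pr * grd + Ps * gsd + 1) ^ 2 - (Pr * grd * Cx) ^ 2) /
              ((Ps * gsd + 1) ^ 2)).

Definition gammar (r : R) : R := Rpower 2 (2 * r) - 1.

Definition Psi (r x : R) : R := sqrt (1 + gammar r * (1 - x ^ 2)) - 1.

Definition P_EE (S : prob_space) (Ps Pr Cx r : R)
    (gsr grr grd gsd : S -> R) : R :=
  ps_P S (fun w => Rmin (R_sr Ps Pr Cx (gsr w) (grr w))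
                        (R_rd Ps Pr Cx (grd w) (gsd w)) < r).

Definition alpha (Pr pirr : R) : R := Pr * pirr / (Pr * pirr + 1).

Definition P_UB_RF (Ps Pr Cx r pisr pirr pird pisd : R) : R :=
  let a := Psi r Cx / (Pr * pird * (1 - Cx ^ 2)) in
  1 - exp (- (a + (Pr * pirr + 1) / (Ps * pisr) * Psi r (alpha Pr pirr * Cx)))
      / (Ps * pisd * a + 1).

From Stdlib Require Import Reals Lra Lia Psatz Classical FunctionalExtensionality PropExtensionality.
Open Scope R_scope.

(* Write s = Ps gsr, v = Pr grr, u = Pr grd and x = Ps gsd + 1.  The relay-destination rate
   reaches r as soon as u >= x Psi(Cx) / (1 - Cx^2).  The source-relay rate reaches r iff
   s >= sqrt (Q v) - v - 1 for a quadratic Q with real roots; sqrt Q is concave, so it suffices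
   that s lies above the tangent line at the mean relay power v0 = Pr pirr.  Both sufficient
   conditions read X > α + β Y for independent exponentials X, Y, an event of probability
   E[exp (- (α + β Y) / m_X)] = exp (- α / m_X) / (1 + β m_Y / m_X); it is bounded from below
   by filling it with grid boxes, whose probabilities factorise by independence.  Finally,
   Jensen's inequality on the source-relay factor turns the tangent offset at v0 into the
   exponent (Pr pirr + 1) Psi(alpha Cx) / (Ps pisr). *)

(** * Events *)

Lemma event_ext {T : Type} (A B : T -> Prop) : (forall w, A w <-> B w) -> A = B.
Proof.
  intro H; apply functional_extensionality; intro w; apply propositional_extensionality, H.
Qed.

Section Events.

Variable Ω : prob_space.
Local Notation meas := (ps_meas Ω).
Local Notation P := (ps_P Ω).

Lemma meas_ext (A B : Ω -> Prop) : (forall w, A w <-> B w) -> meas A -> meas B.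
Proof. intros H; now rewrite (event_ext A B H). Qed.

Lemma P_ext (A B : Ω -> Prop) : (forall w, A w <-> B w) -> P A = P B.
Proof. intros H; now rewrite (event_ext A B H). Qed.

Lemma meas_not (A : Ω -> Prop) : meas A -> meas (fun w => ~ A w).
Proof. apply ps_meas_compl. Qed.

Lemma meas_const (Q : Prop) : meas (fun _ => Q).
Proof.
  destruct (classic Q) as [HQ | HQ].
  - apply (meas_ext (fun _ => True)); [tauto | apply ps_meas_full].
  - apply (meas_ext (fun _ => ~ True)); [tauto | apply meas_not, ps_meas_full].
Qed.

Lemma meas_or (A B : Ω -> Prop) : meas A -> meas B -> meas (fun w => A w \/ B w).
Proof.
  intros HA HB.
  apply (meas_ext (fun w => exists n : nat, match n with 0 => A w | _ => B w end)).
  - intro w; split.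
    + now intros [[|n] H]; [left | right].
    + now intros [H | H]; [exists 0%nat | exists 1%nat].
  - now apply ps_meas_cunion; intros [|n].
Qed.

Lemma meas_and (A B : Ω -> Prop) : meas A -> meas B -> meas (fun w => A w /\ B w).
Proof.
  intros HA HB; apply (meas_ext (fun w => ~ (~ A w \/ ~ B w))).
  - intro w; split; [intro H; split; apply NNPP; tauto | tauto].
  - now apply meas_not, meas_or; apply meas_not.
Qed.

Lemma meas_exists_le (N : nat) (A : nat -> Ω -> Prop) :
  (forall n, meas (A n)) -> meas (fun w => exists n, (n <= N)%nat /\ A n w).
Proof. intros HA; apply ps_meas_cunion; intro n; now apply meas_and; [apply meas_const |]. Qed.

Lemma P_False : P (fun _ => False) = 0.
Proof.
  pose proof (ps_P_sigma_additive Ω (fun _ _ => False) (fun _ => meas_const False)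
    (fun _ _ _ _ H _ => H)) as Hsum.
  rewrite (P_ext _ (fun _ => False)) in Hsum by (intro; split; [intros [_ []] | tauto]).
  set (c := P (fun _ => False)) in *.
  assert (Hc : 0 <= c) by apply ps_P_nonneg, meas_const.
  (* the constant series [c + c + ...] converges only if [c = 0] *)
  destruct (Rle_lt_or_eq_dec _ _ Hc) as [Hlt | <-]; [exfalso | reflexivity].
  destruct (Hsum c Hlt) as [N HN].
  specialize (HN (S N) (Nat.le_succ_diag_r N)).
  rewrite sum_cte in HN; unfold Rdist in HN; rewrite !S_INR in HN.
  pose proof (pos_INR N); rewrite Rabs_right in HN; nra.
Qed.

Lemma P_or_disjoint (A B : Ω -> Prop) : meas A -> meas B -> (forall w, A w -> B w -> False) ->
  P (fun w => A w \/ B w) = P A + P B.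
Proof.
  intros HA HB Hdisj.
  set (F := fun n : nat => match n with 0 => A | 1 => B | _ => fun _ => False end).
  assert (HF : forall n, meas (F n))
    by (intros [|[|n]]; [assumption | assumption | exact (meas_const False)]).
  assert (HFdisj : forall m n w, m <> n -> F m w -> F n w -> False).
  { intros [|[|m]] [|[|n]] w Hmn; cbn; try tauto; try lia; eauto. }
  pose proof (ps_P_sigma_additive Ω F HF HFdisj) as Hsum.
  rewrite (P_ext _ (fun w => A w \/ B w)) in Hsum.
  2: { intro w; split.
       - now intros [[|[|n]] Hn]; cbn in Hn; [left | right |].
       - now intros [H | H]; [exists 0%nat | exists 1%nat]. }
  apply (uniqueness_sum (fun n => P (F n))); [assumption |].
  intros eps Heps; exists 1%nat; intros n Hn.
  replace (sum_f_R0 (fun n => P (F n)) n) with (P A + P B).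
  { now unfold Rdist; rewrite Rminus_diag, Rabs_R0. }
  destruct n as [|n]; [lia |]; clear Hn; induction n as [|n IH]; [reflexivity |].
  now rewrite tech5, <- IH; cbn; rewrite P_False, Rplus_0_r.
Qed.

Lemma P_split (A M : Ω -> Prop) : meas A -> meas M ->
  P A = P (fun w => A w /\ M w) + P (fun w => A w /\ ~ M w).
Proof.
  intros HA HM.
  rewrite <- P_or_disjoint; [| now apply meas_and | now apply meas_and; [| apply meas_not] | tauto].
  apply P_ext; intro w; destruct (classic (M w)); tauto.
Qed.

Lemma P_compl (A : Ω -> Prop) : meas A -> P (fun w => ~ A w) = 1 - P A.
Proof.
  intros HA; rewrite <- (ps_P_full Ω), (P_split _ A (ps_meas_full Ω) HA).
  rewrite (P_ext (fun w => True /\ A w) A), (P_ext (fun w => True /\ ~ A w) (fun w => ~ A w)) by tauto.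
  ring.
Qed.

Lemma P_mono (A B : Ω -> Prop) : meas A -> meas B -> (forall w, A w -> B w) -> P A <= P B.
Proof.
  intros HA HB HAB.
  rewrite (P_split B A HB HA), (P_ext (fun w => B w /\ A w) A) by (intro; split; [tauto | auto]).
  pose proof (ps_P_nonneg Ω _ (meas_and _ _ HB (meas_not _ HA))); lra.
Qed.

Lemma P_exists_le_disjoint (N : nat) (A : nat -> Ω -> Prop) :
  (forall n, meas (A n)) -> (forall m n w, m <> n -> A m w -> A n w -> False) ->
  P (fun w => exists n, (n <= N)%nat /\ A n w) = sum_f_R0 (fun n => P (A n)) N.
Proof.
  intros HA Hdisj; induction N as [|N IH]; cbn.
  - apply P_ext; intro w; split; [| now exists 0%nat].
    intros [n [Hn H]]; now replace n with 0%nat in H by lia.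
  - rewrite <- IH, <- P_or_disjoint; [| now apply meas_exists_le | apply HA |].
    + apply P_ext; intro w; split.
      * intros [n [Hn H]]; destruct (Nat.eq_dec n (S N)) as [-> | Hne];
          [right | left; exists n; split]; auto; lia.
      * intros [[n [Hn H]] | H]; [exists n | exists (S N)]; split; auto; lia.
    + intros w [n [Hn H1]] H2; apply (Hdisj n (S N) w); auto; lia.
Qed.

End Events.

(** * Random variables *)

Lemma exists_nat_fraction_between (x y : R) : x < y ->
  exists p k m : nat, x < (INR p - INR k) / INR (S m) < y.
Proof.
  intros Hxy; destruct (archimed_cor1 (y - x)) as [M [HM HM0]]; [lra |].
  assert (HMpos : 0 < INR M) by now apply lt_0_INR.
  destruct (archimed (x * INR M)) as [Hz1 Hz2]; set (z := up (x * INR M)) in *.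
  exists (Z.to_nat z), (Z.to_nat (- z)), (M - 1)%nat.
  replace (INR (Z.to_nat z) - INR (Z.to_nat (- z))) with (IZR z).
  2: { rewrite !INR_IZR_INZ, <- minus_IZR; f_equal; lia. }
  replace (S (M - 1)) with M by lia.
  assert (HMinv : INR M * / INR M = 1) by (field; lra).
  split; apply (Rmult_lt_reg_r (INR M)); auto; unfold Rdiv; rewrite Rmult_assoc, Rinv_l; nra.
Qed.

Section RandomVariables.

Variable Ω : prob_space.
Local Notation meas := (ps_meas Ω).
Local Notation rv := (random_variable Ω).

Lemma random_variable_ext (X Y : Ω -> R) : (forall w, X w = Y w) -> rv X -> rv Y.
Proof. intros H; now replace Y with X by (apply functional_extensionality; exact H). Qed.

Lemma meas_rv_gt (X : Ω -> R) (t : R) : rv X -> meas (fun w => t < X w).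
Proof.
  intros HX; apply (meas_ext Ω (fun w => ~ X w <= t)); [intro w; lra | apply meas_not, HX].
Qed.

Lemma meas_rv_lt (X : Ω -> R) (t : R) : rv X -> meas (fun w => X w < t).
Proof.
  intros HX; apply (meas_ext Ω (fun w => exists n : nat, X w <= t - / INR (S n))).
  - intro w; split.
    + intros [n Hn]; assert (0 < / INR (S n)) by (apply Rinv_0_lt_compat, lt_0_INR; lia); lra.
    + intro H; destruct (archimed_cor1 (t - X w)) as [N [HN HN0]]; [lra |].
      exists N; assert (/ INR (S N) <= / INR N) by (apply Rinv_le_contravar;
        [now apply lt_0_INR | rewrite S_INR; lra]); lra.
  - apply ps_meas_cunion; intro n; apply HX.
Qed.

Lemma meas_rv_ge (X : Ω -> R) (t : R) : rv X -> meas (fun w => t <= X w).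
Proof.
  intros HX; apply (meas_ext Ω (fun w => ~ X w < t)); [intro w; lra | now apply meas_not, meas_rv_lt].
Qed.

Lemma random_variable_const (c : R) : rv (fun _ => c).
Proof. intro t; apply meas_const. Qed.

Lemma random_variable_scal (c : R) (X : Ω -> R) : rv X -> rv (fun w => c * X w).
Proof.
  intros HX t; destruct (Rtotal_order c 0) as [Hc | [-> | Hc]].
  - apply (meas_ext Ω (fun w => t / c <= X w)); [| now apply meas_rv_ge].
    intro w; assert (c * (t / c) = t) by (field; lra); split; intro; nra.
  - apply (meas_ext Ω (fun _ => 0 <= t)); [intro w; rewrite Rmult_0_l; tauto | apply meas_const].
  - apply (meas_ext Ω (fun w => X w <= t / c)); [| apply HX].
    intro w; assert (c * (t / c) = t) by (field; lra); split; intro; nra.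
Qed.

Lemma random_variable_opp (X : Ω -> R) : rv X -> rv (fun w => - X w).
Proof.
  intros HX; apply (random_variable_ext (fun w => -1 * X w)); [intro; ring | now apply random_variable_scal].
Qed.

Lemma random_variable_plus (X Y : Ω -> R) : rv X -> rv Y -> rv (fun w => X w + Y w).
Proof.
  intros HX HY t.
  (* [t < X + Y] iff some fraction [q] separates: [q < X] and [t - q < Y] *)
  apply (meas_ext Ω (fun w => ~ exists p k m : nat,
    (INR p - INR k) / INR (S m) < X w /\ t - (INR p - INR k) / INR (S m) < Y w)).
  - intro w; split.
    + intro H; apply Rnot_lt_le; intro Hlt; apply H.
      destruct (exists_nat_fraction_between (t - Y w) (X w)) as (p & k & m & Hq); [lra |].
      exists p, k, m; lra.
    + intros H (p & k & m & H1 & H2); lra.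
  - apply meas_not; do 3 (apply ps_meas_cunion; intro).
    apply meas_and; now apply meas_rv_gt.
Qed.

Lemma random_variable_minus (X Y : Ω -> R) : rv X -> rv Y -> rv (fun w => X w - Y w).
Proof. intros; now apply random_variable_plus, random_variable_opp. Qed.

Lemma meas_rv_lt_rv (X Y : Ω -> R) : rv X -> rv Y -> meas (fun w => X w < Y w).
Proof.
  intros HX HY; apply (meas_ext Ω (fun w => 0 < Y w - X w)); [intro w; lra |].
  now apply meas_rv_gt, random_variable_minus.
Qed.

Lemma random_variable_sq (X : Ω -> R) : rv X -> rv (fun w => X w * X w).
Proof.
  intros HX t; destruct (Rlt_or_le t 0) as [Ht | Ht].
  - apply (meas_ext Ω (fun _ => False)); [intro w; nra | apply meas_const].
  - apply (meas_ext Ω (fun w => - sqrt t <= X w /\ X w <= sqrt t)).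
    + intro w; pose proof (sqrt_sqrt t Ht); pose proof (sqrt_pos t).
      split; [intros [H1 H2]; nra | intro Hsq; split; apply Rnot_lt_le; intro; nra].
    + apply meas_and; [now apply meas_rv_ge | apply HX].
Qed.

Lemma random_variable_mult (X Y : Ω -> R) : rv X -> rv Y -> rv (fun w => X w * Y w).
Proof.
  intros HX HY.
  apply (random_variable_ext (fun w => / 4 * ((X w + Y w) * (X w + Y w) - (X w - Y w) * (X w - Y w)))).
  { intro; field. }
  apply random_variable_scal, random_variable_minus; apply random_variable_sq;
    [apply random_variable_plus | apply random_variable_minus]; assumption.
Qed.

Lemma random_variable_pow (X : Ω -> R) (n : nat) : rv X -> rv (fun w => X w ^ n).
Proof.
  intros HX; induction n as [|n IH]; [exact (random_variable_const 1) |].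
  now apply random_variable_mult.
Qed.

Lemma random_variable_inv (X : Ω -> R) : rv X -> rv (fun w => / X w).
Proof.
  intros HX t.
  apply (meas_ext Ω (fun w => (X w <= 0 /\ 0 <= X w /\ 0 <= t)
                           \/ (0 < X w /\ 1 <= t * X w) \/ (X w < 0 /\ t * X w <= 1))).
  - intro w; destruct (Rtotal_order (X w) 0) as [Hx | [Hx | Hx]].
    + assert (Hinv : X w * / X w = 1) by (field; lra).
      assert (Hsign : / X w < 0) by now apply Rinv_lt_0_compat.
      split; [intros [H | [H | [_ H]]]; nra | intro; right; right; split; nra].
    + rewrite Hx, Rinv_0; split; [intros [H | [H | H]]; lra | intro; left; lra].
    + assert (Hinv : X w * / X w = 1) by (field; lra).
      assert (Hsign : 0 < / X w) by now apply Rinv_0_lt_compat.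
      split; [intros [H | [[_ H] | H]]; nra | intro; right; left; split; nra].
  - apply meas_or; [| apply meas_or].
    + apply meas_and; [apply HX | apply meas_and; [now apply meas_rv_ge | apply meas_const]].
    + apply meas_and; [now apply meas_rv_gt | apply meas_rv_ge, random_variable_scal, HX].
    + apply meas_and; [now apply meas_rv_lt | apply random_variable_scal, HX].
Qed.

Lemma random_variable_ln (X : Ω -> R) : rv X -> rv (fun w => ln (X w)).
Proof.
  intros HX t.
  (* [ln] is [0] on nonpositive arguments *)
  apply (meas_ext Ω (fun w => (X w <= 0 /\ 0 <= t) \/ (0 < X w /\ X w <= exp t))).
  - intro w; destruct (Rle_or_lt (X w) 0) as [Hx | Hx].
    + assert (Hln : ln (X w) = 0) by (unfold ln; destruct (Rlt_dec 0 (X w)); [exfalso; lra | reflexivity]).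
      rewrite Hln; split; [intros [[_ H] | [H _]]; lra | intro; left; split; lra].
    + rewrite <- (exp_ln (X w) Hx) at 3; split.
      * intros [[H _] | [_ [H | H]]]; [lra | left; now apply exp_lt_inv | right; now apply exp_inv].
      * intros H; right; split; [exact Hx |].
        destruct H as [H | H]; [left; now apply exp_increasing | right; now rewrite H].
  - apply meas_or; apply meas_and; try apply meas_const; try apply HX.
    + now apply meas_rv_gt.
Qed.

Lemma meas_linear_threshold (X Y : Ω -> R) (α β : R) : rv X -> rv Y ->
  meas (fun w => 0 <= Y w /\ α + β * Y w < X w).
Proof.
  intros HX HY; apply meas_and; [now apply meas_rv_ge |].
  apply meas_rv_lt_rv; [| exact HX].
  apply random_variable_plus; [apply random_variable_const | now apply random_variable_scal].
Qed.

End RandomVariables.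

(** * Distribution functions and independence *)

Definition cdf (Ω : prob_space) (X : Ω -> R) (t : R) : R := ps_P Ω (fun w => X w <= t).

Section Continuity.

Variable Ω : prob_space.
Local Notation meas := (ps_meas Ω).
Local Notation P := (ps_P Ω).

Lemma P_increasing_union_cv (A : nat -> Ω -> Prop) :
  (forall n, meas (A n)) -> (forall n w, A n w -> A (S n) w) ->
  Un_cv (fun n => P (A n)) (P (fun w => exists n, A n w)).
Proof.
  intros HA Hinc.
  assert (Hmono : forall m n w, (m <= n)%nat -> A m w -> A n w) by (intros m n w Hmn; induction Hmn; auto).
  set (B := fun n w => A n w /\ ~ exists k, (k < n)%nat /\ A k w).
  assert (HB : forall n, meas (B n)).
  { intro n; apply meas_and; [apply HA |].
    apply meas_not, ps_meas_cunion; intro k; apply meas_and; [apply meas_const | apply HA]. }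
  assert (HBdisj : forall m n w, m <> n -> B m w -> B n w -> False).
  { intros m n w Hmn [HAm HBm] [HAn HBn].
    destruct (Nat.lt_gt_cases m n) as [[Hlt | Hlt] _]; [exact Hmn | |].
    - apply HBn; now exists m.
    - apply HBm; now exists n. }
  assert (Hunion : forall w, (exists n, A n w) <-> exists n, B n w).
  { intro w; split; [| intros [n [H _]]; now exists n].
    intros [n Hn]; induction n as [n IH] using (well_founded_induction Wf_nat.lt_wf).
    destruct (classic (exists k, (k < n)%nat /\ A k w)) as [[k [Hk HAk]] | Hfirst].
    - exact (IH k Hk HAk).
    - now exists n. }
  assert (Hpartial : forall n, sum_f_R0 (fun k => P (B k)) n = P (A n)).
  { induction n as [|n IH]; cbn.
    - apply P_ext; intro w; split; [now intros [H _] | intro H; split; [exact H |]].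
      intros [k [Hk _]]; lia.
    - rewrite IH, (P_split Ω (A (S n)) (A n)) by apply HA.
      f_equal; apply P_ext; intro w; split.
      + intro H; split; auto.
      + now intros [_ H].
      + intros [HS HBS]; split; [exact HS |].
        intro HAn; apply HBS; exists n; split; [lia | exact HAn].
      + intros [HS HAn]; split; [exact HS |].
        intros [k [Hk HAk]]; apply HAn, (Hmono k n); [lia | exact HAk]. }
  pose proof (ps_P_sigma_additive Ω B HB HBdisj) as Hsum.
  rewrite (P_ext Ω (fun w => exists n, A n w) (fun w => exists n, B n w)) by apply Hunion.
  intros eps Heps; destruct (Hsum eps Heps) as [N HN]; exists N; intros n Hn.
  rewrite <- Hpartial; exact (HN n Hn).
Qed.

Lemma Un_cv_const (c : R) : Un_cv (fun _ => c) c.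
Proof. intros eps Heps; exists 0%nat; intros; unfold Rdist; rewrite Rminus_diag, Rabs_R0; lra. Qed.

End Continuity.

Section CdfFactorisation.

Variables (Ω : prob_space) (X : Ω -> R) (G : Ω -> Prop) (c : R).
Hypothesis HX : random_variable Ω X.
Hypothesis HG : ps_meas Ω G.
Hypothesis Hfactor : forall t, ps_P Ω (fun w => X w <= t /\ G w) = cdf Ω X t * c.

Local Notation P := (ps_P Ω).

Lemma P_of_cdf_factorisation : P G = c.
Proof.
  assert (Hup : forall w, exists n, X w <= INR n).
  { intro w; destruct (INR_unbounded (X w)) as [n Hn]; exists n; lra. }
  assert (Hinc : forall (Q : Ω -> Prop) n w, X w <= INR n /\ Q w -> X w <= INR (S n) /\ Q w).
  { intros Q n w [Hn HQ]; rewrite S_INR; split; [lra | exact HQ]. }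
  assert (HcvG := P_increasing_union_cv Ω (fun n w => X w <= INR n /\ G w)
    (fun n => meas_and Ω _ _ (HX _) HG) (Hinc G)).
  assert (Hcv1 := P_increasing_union_cv Ω (fun n w => X w <= INR n /\ True)
    (fun n => meas_and Ω _ _ (HX _) (ps_meas_full Ω)) (Hinc (fun _ => True))).
  rewrite (P_ext Ω _ G) in HcvG by (intro w; split; [intros [n [_ H]]; exact H |
    intro H; destruct (Hup w) as [n Hn]; now exists n]).
  rewrite (P_ext Ω _ (fun _ => True)), (ps_P_full Ω) in Hcv1
    by (intro w; split; [tauto | intros _; destruct (Hup w) as [n Hn]; now exists n]).
  apply (UL_sequence (fun n => P (fun w => X w <= INR n /\ G w))); [exact HcvG |].
  rewrite <- (Rmult_1_l c).
  intros eps Heps; destruct (CV_mult _ _ _ _ Hcv1 (Un_cv_const c) eps Heps) as [N HN].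
  exists N; intros n Hn; rewrite Hfactor; unfold cdf.
  rewrite (P_ext Ω _ (fun w => X w <= INR n /\ True)) by tauto; exact (HN n Hn).
Qed.

Lemma P_Ioi_and (a : R) : P (fun w => a < X w /\ G w) = (1 - cdf Ω X a) * c.
Proof.
  pose proof P_of_cdf_factorisation as HPG.
  rewrite (P_split Ω G (fun w => X w <= a) HG (HX a)) in HPG.
  rewrite (P_ext Ω (fun w => G w /\ X w <= a) (fun w => X w <= a /\ G w)), Hfactor in HPG by tauto.
  rewrite (P_ext Ω (fun w => G w /\ ~ X w <= a) (fun w => a < X w /\ G w)) in HPG
    by (intro w; split; intros [H1 H2]; split; auto; lra).
  lra.
Qed.

Lemma P_Ioc_and (a b : R) : a <= b ->
  P (fun w => (a < X w <= b) /\ G w) = (cdf Ω X b - cdf Ω X a) * c.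
Proof.
  intros Hab; rewrite Rmult_minus_distr_r, <- !Hfactor.
  rewrite (P_split Ω (fun w => X w <= b /\ G w) (fun w => X w <= a))
    by (apply meas_and; [apply HX | exact HG] || apply HX).
  rewrite (P_ext Ω (fun w => (X w <= b /\ G w) /\ X w <= a) (fun w => X w <= a /\ G w))
    by (intro w; split; [tauto | intros [H1 H2]; repeat split; auto; lra]).
  rewrite (P_ext Ω (fun w => (X w <= b /\ G w) /\ ~ X w <= a) (fun w => (a < X w <= b) /\ G w))
    by (intro w; split; intros [[H1 H2] H3]; repeat split; auto; lra).
  ring.
Qed.

End CdfFactorisation.

Section IndependentBoxes.

Variable Ω : prob_space.
Variables X1 X2 X3 X4 : Ω -> R.
Hypotheses (HX1 : random_variable Ω X1) (HX2 : random_variable Ω X2)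
  (HX3 : random_variable Ω X3) (HX4 : random_variable Ω X4).
Hypothesis Hind : mutually_independent4 Ω X1 X2 X3 X4.

Local Notation P := (ps_P Ω).
Local Notation F := (cdf Ω).

Lemma meas_Ioc (X : Ω -> R) (a b : R) : random_variable Ω X -> ps_meas Ω (fun w => a < X w <= b).
Proof. intros HX; apply meas_and; [now apply meas_rv_gt | apply HX]. Qed.

(* The coordinates are released one at a time, using the factorisation in the
   remaining ones as the hypothesis of the next step. *)
Lemma P_independent_box (a1 a2 b2 a3 a4 b4 : R) : a2 <= b2 -> a4 <= b4 ->
  P (fun w => a1 < X1 w /\ (a2 < X2 w <= b2) /\ a3 < X3 w /\ (a4 < X4 w <= b4)) =
  (1 - F X1 a1) * (F X2 b2 - F X2 a2) * (1 - F X3 a3) * (F X4 b4 - F X4 a4).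
Proof.
  intros Hab2 Hab4.
  assert (H1 : forall t2 t3 t4,
    P (fun w => a1 < X1 w /\ X2 w <= t2 /\ X3 w <= t3 /\ X4 w <= t4) =
    (1 - F X1 a1) * (F X2 t2 * F X3 t3 * F X4 t4)).
  { intros t2 t3 t4; apply P_Ioi_and; [exact HX1 | |].
    - apply meas_and; [apply HX2 | apply meas_and; [apply HX3 | apply HX4]].
    - intro t; unfold cdf; rewrite Hind; ring. }
  assert (H2 : forall t3 t4,
    P (fun w => a1 < X1 w /\ (a2 < X2 w <= b2) /\ X3 w <= t3 /\ X4 w <= t4) =
    (1 - F X1 a1) * (F X2 b2 - F X2 a2) * (F X3 t3 * F X4 t4)).
  { intros t3 t4.
    rewrite (P_ext Ω _ (fun w => (a2 < X2 w <= b2) /\ (a1 < X1 w /\ X3 w <= t3 /\ X4 w <= t4))) by tauto.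
    rewrite (P_Ioc_and Ω X2 _ ((1 - F X1 a1) * (F X3 t3 * F X4 t4))); [ring | exact HX2 | | | exact Hab2].
    - apply meas_and; [now apply meas_rv_gt | apply meas_and; [apply HX3 | apply HX4]].
    - intro t; rewrite (P_ext Ω _ (fun w => a1 < X1 w /\ X2 w <= t /\ X3 w <= t3 /\ X4 w <= t4)) by tauto.
      rewrite H1; ring. }
  assert (H3 : forall t4,
    P (fun w => a1 < X1 w /\ (a2 < X2 w <= b2) /\ a3 < X3 w /\ X4 w <= t4) =
    (1 - F X1 a1) * (F X2 b2 - F X2 a2) * (1 - F X3 a3) * F X4 t4).
  { intro t4.
    rewrite (P_ext Ω _ (fun w => a3 < X3 w /\ (a1 < X1 w /\ (a2 < X2 w <= b2) /\ X4 w <= t4))) by tauto.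
    rewrite (P_Ioi_and Ω X3 _ ((1 - F X1 a1) * (F X2 b2 - F X2 a2) * F X4 t4)); [ring | exact HX3 | |].
    - apply meas_and; [now apply meas_rv_gt | apply meas_and; [now apply meas_Ioc | apply HX4]].
    - intro t; rewrite (P_ext Ω _ (fun w => a1 < X1 w /\ (a2 < X2 w <= b2) /\ X3 w <= t /\ X4 w <= t4)) by tauto.
      rewrite H2; ring. }
  rewrite (P_ext Ω _ (fun w => (a4 < X4 w <= b4) /\ (a1 < X1 w /\ (a2 < X2 w <= b2) /\ a3 < X3 w))) by tauto.
  rewrite (P_Ioc_and Ω X4 _ ((1 - F X1 a1) * (F X2 b2 - F X2 a2) * (1 - F X3 a3)));
    [ring | exact HX4 | | | exact Hab4].
  - apply meas_and; [now apply meas_rv_gt | apply meas_and; [now apply meas_Ioc | now apply meas_rv_gt]].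
  - intro t; rewrite (P_ext Ω _ (fun w => a1 < X1 w /\ (a2 < X2 w <= b2) /\ a3 < X3 w /\ X4 w <= t)) by tauto.
    rewrite H3; ring.
Qed.

End IndependentBoxes.

(** * Exponential laws *)

Lemma div_nonneg (x y : R) : 0 <= x -> 0 < y -> 0 <= x / y.
Proof. intros Hx Hy; apply Rmult_le_pos; [exact Hx | left; now apply Rinv_0_lt_compat]. Qed.

Lemma exp_pow (x : R) (n : nat) : exp x ^ n = exp (INR n * x).
Proof.
  induction n as [|n IH]; [now rewrite Rmult_0_l, exp_0 |].
  now rewrite S_INR, <- tech_pow_Rmult, IH, <- exp_plus, Rmult_plus_distr_r, Rmult_1_l, Rplus_comm.
Qed.

Lemma exp_neg_mul_le (x : R) : exp (- x) * (1 + x) <= 1.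
Proof.
  assert (Hinv : exp (- x) * exp x = 1) by now rewrite <- exp_plus, Rplus_opp_l, exp_0.
  pose proof (exp_ineq1_le x); pose proof (exp_pos (- x)); nra.
Qed.

(* [exp_laplace m α β] is E[exp (- (α + β X))] for X exponential with mean [m]. *)
Definition exp_laplace (m α β : R) : R := exp (- α) / (1 + β * m).

(* [P (i h < X <= (i + 1) h) * exp (- (α + β (i + 1) h))] for X exponential with mean [m]:
   summing over [i] gives E[exp (- (α + β X))] with X rounded up to the grid [h N]. *)
Definition grid_cell (m α β h : R) (i : nat) : R :=
  (exp (- (INR i * h) / m) - exp (- (INR (S i) * h) / m)) * exp (- (α + β * (INR (S i) * h))).

Lemma grid_cell_sum_nonneg (m α β h : R) (N : nat) : 0 < m -> 0 < h ->
  0 <= sum_f_R0 (grid_cell m α β h) N.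
Proof.
  intros Hm Hh; apply cond_pos_sum; intro i; apply Rmult_le_pos; [| left; apply exp_pos].
  pose proof (pos_INR i); assert (Hmi : 0 < / m) by now apply Rinv_0_lt_compat.
  pose proof (exp_increasing (- (INR (S i) * h) / m) (- (INR i * h) / m)).
  rewrite S_INR in *; unfold Rdiv in *; nra.
Qed.

Lemma exp_grid_ratio_ge (m β h : R) : 0 < m -> 0 <= β -> 0 < h ->
  / ((1 + β * m) * (1 + h / m)) <= (1 - exp (- (h / m))) / (1 - exp (- (h * (β + / m)))).
Proof.
  intros Hm Hβ Hh.
  set (e := exp (- (h / m))); set (q := exp (- (h * (β + / m)))).
  assert (Hmi : 0 < / m) by now apply Rinv_0_lt_compat.
  assert (Hhm : 0 < h / m) by (unfold Rdiv; nra).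
  assert (Hc : 0 < h * (β + / m)) by (apply Rmult_lt_0_compat; lra).
  assert (Hq1 : q < 1) by (unfold q; rewrite <- exp_0; apply exp_increasing; lra).
  (* [1 - q <= h (β + 1/m) = (h/m) (1 + β m) <= (1 - e) (1 + h/m) (1 + β m)] *)
  assert (He : e * (1 + h / m) <= 1) by apply exp_neg_mul_le.
  assert (Hqlin : 1 - q <= h * (β + / m)) by (pose proof (exp_ineq1_le (- (h * (β + / m)))); unfold q; lra).
  assert (Hpos : 0 < (1 + β * m) * (1 + h / m) * (1 - q)).
  { assert (0 < (1 + β * m) * (1 + h / m)) by (apply Rmult_lt_0_compat; nra).
    apply Rmult_lt_0_compat; lra. }
  apply (Rmult_le_reg_r _ _ _ Hpos).
  replace (/ ((1 + β * m) * (1 + h / m)) * ((1 + β * m) * (1 + h / m) * (1 - q))) with (1 - q)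
    by (field; split; nra).
  replace ((1 - e) / (1 - q) * ((1 + β * m) * (1 + h / m) * (1 - q)))
    with ((1 - e) * (1 + h / m) * (1 + β * m)) by (field; lra).
  assert (h * (β + / m) = h / m * (1 + β * m)) by (field; lra).
  assert (h / m <= (1 - e) * (1 + h / m)) by lra.
  assert (0 <= 1 + β * m) by nra; nra.
Qed.

Lemma exp_laplace_grid_sum_ge (m α β h : R) (N : nat) : 0 < m -> 0 <= β -> 0 < h ->
  exp_laplace m α β * (exp (- (β * h)) / (1 + h / m) * (1 - exp (- (INR (S N) * h * (β + / m)))))
  <= sum_f_R0 (grid_cell m α β h) N.
Proof.
  intros Hm Hβ Hh.
  set (e := exp (- (h / m))); set (f := exp (- (β * h))); set (q := e * f).
  assert (Hq : q = exp (- (h * (β + / m)))) by (unfold q, e, f; rewrite <- exp_plus; f_equal; field; lra).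
  assert (Hterm : forall i, grid_cell m α β h i = q ^ i * (exp (- α) * f * (1 - e))).
  { intro i; unfold grid_cell.
    assert (E1 : exp (- (INR i * h) / m) = e ^ i) by (unfold e; rewrite exp_pow; f_equal; field; lra).
    assert (E2 : exp (- (INR (S i) * h) / m) = e ^ i * e)
      by (unfold e; rewrite exp_pow, <- exp_plus; f_equal; rewrite S_INR; field; lra).
    assert (E3 : exp (- (α + β * (INR (S i) * h))) = exp (- α) * f * f ^ i)
      by (unfold f; rewrite exp_pow, <- !exp_plus; f_equal; rewrite S_INR; ring).
    rewrite E1, E2, E3; unfold q; rewrite Rpow_mult_distr; ring. }
  assert (Hc : 0 < h * (β + / m)) by (pose proof (Rinv_0_lt_compat m Hm); apply Rmult_lt_0_compat; lra).
  assert (Hq1 : q < 1) by (rewrite Hq, <- exp_0; apply exp_increasing; lra).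
  rewrite (sum_eq _ _ N (fun i _ => Hterm i)), <- scal_sum, tech3 by lra.
  set (Q := exp (- (INR (S N) * h * (β + / m)))).
  replace (q ^ S N) with Q by (unfold Q; rewrite Hq, exp_pow; f_equal; ring).
  assert (HQ : Q <= 1).
  { unfold Q; rewrite <- exp_0; left; apply exp_increasing.
    pose proof (lt_0_INR (S N) (Nat.lt_0_succ N)); nra. }
  pose proof (exp_pos (- α)); pose proof (exp_pos (- (β * h))) as Hf; fold f in Hf.
  pose proof (exp_grid_ratio_ge m β h Hm Hβ Hh) as Hratio; fold e in Hratio; rewrite <- Hq in Hratio.
  unfold exp_laplace.
  replace (exp (- α) / (1 + β * m) * (f / (1 + h / m) * (1 - Q)))
    with (exp (- α) * f * (1 - Q) * / ((1 + β * m) * (1 + h / m)))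
    by (field; split; [unfold Rdiv; pose proof (Rinv_0_lt_compat m Hm); nra | nra]).
  replace (exp (- α) * f * (1 - e) * ((1 - Q) / (1 - q)))
    with (exp (- α) * f * (1 - Q) * ((1 - e) / (1 - q))) by (field; lra).
  apply Rmult_le_compat_l; [| exact Hratio].
  apply Rmult_le_pos; [apply Rmult_le_pos |]; lra.
Qed.

Lemma exp_laplace_nonneg (m α β : R) : 0 < m -> 0 <= β -> 0 <= exp_laplace m α β.
Proof.
  intros Hm Hβ; unfold exp_laplace; apply Rmult_le_pos; [left; apply exp_pos |].
  left; apply Rinv_0_lt_compat; nra.
Qed.

Lemma mult3_ge (a b c : R) : 0 <= a <= 1 -> 0 <= b <= 1 -> 0 <= c <= 1 -> a + b + c - 2 <= a * b * c.
Proof.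
  intros Ha Hb Hc; assert (a + b - 1 <= a * b) by nra.
  destruct (Rle_or_lt 0 (a + b - 1)); nra.
Qed.

Lemma exp_laplace_grid_sum_ge_asymptotic (m α β : R) (n : nat) : 0 < m -> 0 <= β -> (0 < n)%nat ->
  exp_laplace m α β * (1 - (β + / m + m) / INR n) <= sum_f_R0 (grid_cell m α β (/ INR n)) (n * n).
Proof.
  intros Hm Hβ Hn.
  assert (Hn0 : 0 < INR n) by now apply lt_0_INR.
  set (h := / INR n); assert (Hh : 0 < h) by now apply Rinv_0_lt_compat.
  assert (Hmi : 0 < / m) by now apply Rinv_0_lt_compat.
  eapply Rle_trans; [| apply (exp_laplace_grid_sum_ge m α β h (n * n) Hm Hβ Hh)].
  apply Rmult_le_compat_l; [now apply exp_laplace_nonneg |].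
  set (a := exp (- (β * h))); set (b := / (1 + h / m)).
  set (Q := exp (- (INR (S (n * n)) * h * (β + / m)))).
  assert (Ha : 1 - β * h <= a <= 1).
  { split; [pose proof (exp_ineq1_le (- (β * h))); unfold a; lra |].
    pose proof (exp_neg_mul_le (β * h)); fold a in H; assert (0 <= β * h) by nra; nra. }
  assert (Hb : 1 - h / m <= b <= 1).
  { assert (Hhm : 0 < h / m) by (unfold Rdiv; nra).
    assert (Hb1 : b * (1 + h / m) = 1) by (unfold b; field; lra).
    assert (0 < b) by (unfold b; apply Rinv_0_lt_compat; lra); split; nra. }
  assert (HQ : 0 < Q <= 1 /\ Q <= m * h).
  { split; [split; [apply exp_pos | unfold Q; rewrite <- exp_0; left; apply exp_increasing] |].
    { pose proof (lt_0_INR (S (n * n)) (Nat.lt_0_succ _)).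
      assert (0 < INR (S (n * n)) * h * (β + / m)) by (repeat apply Rmult_lt_0_compat; lra); lra. }
    set (x := INR (S (n * n)) * h * (β + / m)).
    assert (Hx : INR n * / m <= x).
    { unfold x; rewrite S_INR, mult_INR.
      replace ((INR n * INR n + 1) * h) with (INR n + h) by (unfold h; field; lra).
      assert (0 <= h * / m) by nra; nra. }
    pose proof (exp_neg_mul_le x) as HQx; change (Q * (1 + x) <= 1) in HQx.
    assert (HQ0 : 0 < Q) by apply exp_pos.
    assert (HQn : Q * (INR n * / m) <= 1) by nra.
    assert (Hid : Q * (INR n * / m) * (m * h) = Q) by (unfold h; field; lra).
    rewrite <- Hid; assert (0 < m * h) by nra; nra. }
  fold Q; replace ((β + / m + m) / INR n) with (β * h + h / m + m * h) by (unfold h; field; lra).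
  assert (Ha0 : 0 < a) by apply exp_pos.
  assert (Hb0 : 0 < b) by (unfold b; apply Rinv_0_lt_compat; unfold Rdiv; nra).
  destruct HQ as [[HQ0 HQ1] HQm].
  assert (Hprod : a + b + (1 - Q) - 2 <= a * b * (1 - Q)) by (apply mult3_ge; lra).
  change (a / (1 + h / m)) with (a * b); lra.
Qed.

Lemma le_of_forall_le_plus_div (x y C : R) :
  (forall n : nat, (0 < n)%nat -> x <= y + C / INR n) -> x <= y.
Proof.
  intros H; apply Rnot_lt_le; intro Hlt.
  set (M := Rabs C / (x - y)); assert (HM : 0 <= M) by (apply div_nonneg; [apply Rabs_pos | lra]).
  destruct (INR_unbounded M) as [n Hn].
  assert (Hn0 : (0 < n)%nat) by (apply INR_lt; simpl; lra).
  specialize (H n Hn0); pose proof (lt_0_INR n Hn0) as HnR.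
  assert (HC : C < (x - y) * INR n).
  { assert (HCM : C <= M * (x - y)).
    { unfold M; replace (Rabs C / (x - y) * (x - y)) with (Rabs C) by (field; lra); apply Rle_abs. }
    nra. }
  assert (C / INR n < x - y); [| lra].
  apply (Rmult_lt_reg_r (INR n)); [exact HnR |]; replace (C / INR n * INR n) with C by (field; lra); lra.
Qed.

Lemma mult_ge_of_relative_defects (x y a b da db : R) :
  0 <= a -> 0 <= b -> 0 <= da -> 0 <= db -> 0 <= x -> 0 <= y ->
  a * (1 - da) <= x -> b * (1 - db) <= y -> a * b * (1 - da - db) <= x * y.
Proof.
  intros Ha Hb Hda Hdb Hx Hy Hax Hby.
  assert (Hxy : 0 <= x * y) by now apply Rmult_le_pos.
  assert (Hab : 0 <= a * b) by now apply Rmult_le_pos.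
  destruct (Rle_or_lt 0 (1 - da)) as [H1 | H1]; [destruct (Rle_or_lt 0 (1 - db)) as [H2 | H2] |].
  - assert (a * (1 - da) * (b * (1 - db)) <= x * y) by (apply Rmult_le_compat; nra).
    assert (0 <= a * b * (da * db)) by (apply Rmult_le_pos; nra); nra.
  - assert (0 <= a * b * (db - 1)) by (apply Rmult_le_pos; lra).
    assert (0 <= a * b * da) by (apply Rmult_le_pos; lra); nra.
  - assert (0 <= a * b * (da - 1)) by (apply Rmult_le_pos; lra).
    assert (0 <= a * b * db) by (apply Rmult_le_pos; lra); nra.
Qed.

Lemma Ioc_grid_disjoint (h x : R) (i j : nat) : 0 < h -> i <> j ->
  INR i * h < x <= INR (S i) * h -> INR j * h < x <= INR (S j) * h -> False.
Proof.
  intros Hh Hij [Hi1 Hi2] [Hj1 Hj2].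
  destruct (Nat.lt_gt_cases i j) as [[Hlt | Hlt] _]; [exact Hij | |].
  - assert (INR (S i) <= INR j) by (apply le_INR; lia); nra.
  - assert (INR (S j) <= INR i) by (apply le_INR; lia); nra.
Qed.

Lemma grid_bounds (h : R) (i : nat) : 0 < h -> 0 <= INR i * h <= INR (S i) * h.
Proof. intros Hh; pose proof (pos_INR i); rewrite S_INR; split; nra. Qed.

Lemma exponential_tail (Ω : prob_space) (m : R) (X : Ω -> R) (t : R) :
  exponential_rv Ω m X -> 0 <= t -> 1 - cdf Ω X t = exp (- t / m).
Proof. intros [_ [_ HF]] Ht; unfold cdf; rewrite HF by exact Ht; ring. Qed.

Section ExponentialThresholds.

Variable Ω : prob_space.
Variables (X1 X2 X3 X4 : Ω -> R) (m1 m2 m3 m4 : R).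
Hypotheses (Hm1 : 0 < m1) (Hm2 : 0 < m2) (Hm3 : 0 < m3) (Hm4 : 0 < m4).
Hypotheses (HX1 : exponential_rv Ω m1 X1) (HX2 : exponential_rv Ω m2 X2)
  (HX3 : exponential_rv Ω m3 X3) (HX4 : exponential_rv Ω m4 X4).
Hypothesis Hind : mutually_independent4 Ω X1 X2 X3 X4.

Local Notation P := (ps_P Ω).

Let HR1 : random_variable Ω X1 := proj1 HX1.
Let HR2 : random_variable Ω X2 := proj1 HX2.
Let HR3 : random_variable Ω X3 := proj1 HX3.
Let HR4 : random_variable Ω X4 := proj1 HX4.

Variables (α1 β1 α2 β2 : R).
Hypotheses (Hα1 : 0 <= α1) (Hβ1 : 0 <= β1) (Hα2 : 0 <= α2) (Hβ2 : 0 <= β2).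

Definition grid_box (h : R) (i j : nat) (w : Ω) : Prop :=
  α1 + β1 * (INR (S i) * h) < X1 w /\ (INR i * h < X2 w <= INR (S i) * h) /\
  α2 + β2 * (INR (S j) * h) < X3 w /\ (INR j * h < X4 w <= INR (S j) * h).

Lemma meas_grid_box (h : R) (i j : nat) : ps_meas Ω (grid_box h i j).
Proof.
  unfold grid_box; repeat apply meas_and; first [apply meas_rv_gt; assumption | auto].
Qed.

Lemma P_grid_box (h : R) (i j : nat) : 0 < h ->
  P (grid_box h i j) = grid_cell m2 (α1 / m1) (β1 / m1) h i * grid_cell m4 (α2 / m3) (β2 / m3) h j.
Proof.
  intros Hh; destruct (grid_bounds h i Hh) as [Hi0 Hi]; destruct (grid_bounds h j Hh) as [Hj0 Hj].
  unfold grid_box; rewrite P_independent_box by assumption.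
  replace (cdf Ω X2 (INR (S i) * h) - cdf Ω X2 (INR i * h))
    with ((1 - cdf Ω X2 (INR i * h)) - (1 - cdf Ω X2 (INR (S i) * h))) by ring.
  replace (cdf Ω X4 (INR (S j) * h) - cdf Ω X4 (INR j * h))
    with ((1 - cdf Ω X4 (INR j * h)) - (1 - cdf Ω X4 (INR (S j) * h))) by ring.
  rewrite !(exponential_tail Ω m1 X1), !(exponential_tail Ω m2 X2),
    !(exponential_tail Ω m3 X3), !(exponential_tail Ω m4 X4) by (assumption || nra).
  unfold grid_cell; replace (- (α1 + β1 * (INR (S i) * h)) / m1)
    with (- (α1 / m1 + β1 / m1 * (INR (S i) * h))) by (field; lra).
  replace (- (α2 + β2 * (INR (S j) * h)) / m3)
    with (- (α2 / m3 + β2 / m3 * (INR (S j) * h))) by (field; lra).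
  ring.
Qed.

Lemma P_grid_union (h : R) (N : nat) : 0 < h ->
  P (fun w => exists i, (i <= N)%nat /\ exists j, (j <= N)%nat /\ grid_box h i j w) =
  sum_f_R0 (grid_cell m2 (α1 / m1) (β1 / m1) h) N * sum_f_R0 (grid_cell m4 (α2 / m3) (β2 / m3) h) N.
Proof.
  intros Hh; rewrite P_exists_le_disjoint.
  - rewrite Rmult_comm, scal_sum; apply sum_eq; intros i _.
    rewrite P_exists_le_disjoint, (scal_sum _ N (grid_cell m2 (α1 / m1) (β1 / m1) h i));
      [apply sum_eq; intros j _; rewrite P_grid_box by exact Hh; ring | apply meas_grid_box |].
    intros j1 j2 w Hne [_ [_ [_ H1]]] [_ [_ [_ H2]]]; exact (Ioc_grid_disjoint h (X4 w) j1 j2 Hh Hne H1 H2).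
  - intro i; apply meas_exists_le, meas_grid_box.
  - intros i1 i2 w Hne [j1 [_ [_ [H1 _]]]] [j2 [_ [_ [H2 _]]]].
    exact (Ioc_grid_disjoint h (X2 w) i1 i2 Hh Hne H1 H2).
Qed.

(* The boxes of the grid of mesh [1/n] up to [n] fill the event from inside. *)
Lemma P_exponential_thresholds_ge :
  exp_laplace m2 (α1 / m1) (β1 / m1) * exp_laplace m4 (α2 / m3) (β2 / m3)
  <= P (fun w => (0 <= X2 w /\ α1 + β1 * X2 w < X1 w) /\ (0 <= X4 w /\ α2 + β2 * X4 w < X3 w)).
Proof.
  set (K1 := exp_laplace m2 (α1 / m1) (β1 / m1)); set (K2 := exp_laplace m4 (α2 / m3) (β2 / m3)).
  set (D1 := β1 / m1 + / m2 + m2); set (D2 := β2 / m3 + / m4 + m4).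
  apply (le_of_forall_le_plus_div _ _ (K1 * K2 * (D1 + D2))); intros n Hn.
  pose proof (lt_0_INR n Hn) as Hn0.
  set (h := / INR n); assert (Hh : 0 < h) by now apply Rinv_0_lt_compat.
  assert (Hinside : P (fun w => exists i, (i <= n * n)%nat /\ exists j, (j <= n * n)%nat /\ grid_box h i j w)
    <= P (fun w => (0 <= X2 w /\ α1 + β1 * X2 w < X1 w) /\ (0 <= X4 w /\ α2 + β2 * X4 w < X3 w))).
  { apply P_mono.
    - apply meas_exists_le; intro i; apply meas_exists_le, meas_grid_box.
    - apply meas_and; apply meas_linear_threshold; assumption.
    - intros w [i [_ [j [_ [H1 [[H2 H3] [H4 [H5 H6]]]]]]]].
      destruct (grid_bounds h i Hh) as [Hi0 _]; destruct (grid_bounds h j Hh) as [Hj0 _].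
      repeat split; nra. }
  assert (Hβ1m : 0 <= β1 / m1) by now apply div_nonneg.
  assert (Hβ2m : 0 <= β2 / m3) by now apply div_nonneg.
  assert (HD : forall β m, 0 <= β -> 0 < m -> 0 <= (β + / m + m) / INR n).
  { intros β m Hβ Hm; pose proof (Rinv_0_lt_compat m Hm); apply div_nonneg; lra. }
  pose proof (mult_ge_of_relative_defects _ _ K1 K2 (D1 / INR n) (D2 / INR n)
    (exp_laplace_nonneg _ _ _ Hm2 Hβ1m) (exp_laplace_nonneg _ _ _ Hm4 Hβ2m)
    (HD _ _ Hβ1m Hm2) (HD _ _ Hβ2m Hm4)
    (grid_cell_sum_nonneg _ _ _ _ _ Hm2 Hh) (grid_cell_sum_nonneg _ _ _ _ _ Hm4 Hh)
    (exp_laplace_grid_sum_ge_asymptotic m2 _ _ n Hm2 Hβ1m Hn)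
    (exp_laplace_grid_sum_ge_asymptotic m4 _ _ n Hm4 Hβ2m Hn)) as Hprod.
  rewrite <- P_grid_union in Hprod by exact Hh.
  replace (K1 * K2 * (1 - D1 / INR n - D2 / INR n)) with (K1 * K2 - K1 * K2 * (D1 + D2) / INR n)
    in Hprod by (field; lra).
  lra.
Qed.

End ExponentialThresholds.

(** * The two link rates *)

Lemma ln_le (x y : R) : 0 < x -> x <= y -> ln x <= ln y.
Proof. intros Hx [Hlt | ->]; [left; now apply ln_increasing | lra]. Qed.

Lemma le_half_log2_div (r N D : R) : 0 < D -> Rpower 2 (2 * r) * D <= N -> r <= / 2 * log2 (N / D).
Proof.
  intros HD HN.
  assert (Hpow : 0 < Rpower 2 (2 * r)) by apply exp_pos.
  assert (HND : Rpower 2 (2 * r) <= N / D).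
  { apply (Rmult_le_reg_r D); [exact HD |]; unfold Rdiv; rewrite Rmult_assoc, Rinv_l; lra. }
  pose proof (ln_le _ _ Hpow HND) as Hln; rewrite ln_Rpower in Hln.
  assert (Hln2 : 0 < ln 2) by (rewrite <- ln_1; apply ln_increasing; lra).
  unfold log2; apply (Rmult_le_reg_r (2 * ln 2)); [lra |].
  replace (/ 2 * (ln (N / D) / ln 2) * (2 * ln 2)) with (ln (N / D)) by (field; lra); lra.
Qed.

Lemma Rpower_2_gammar (r : R) : Rpower 2 (2 * r) = 1 + gammar r.
Proof. unfold gammar; ring. Qed.

Lemma gammar_pos (r : R) : 0 < r -> 0 < gammar r.
Proof.
  intros Hr; unfold gammar.
  pose proof (Rpower_lt 2 0 (2 * r) ltac:(lra) ltac:(lra)); rewrite Rpower_O in H by lra; lra.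
Qed.

Lemma one_le_sqrt_1_plus (x : R) : 0 <= x -> 1 <= sqrt (1 + x).
Proof. intros Hx; rewrite <- sqrt_1 at 1; apply sqrt_le_1_alt; lra. Qed.

Lemma Psi_nonneg (r x : R) : 0 < r -> x ^ 2 <= 1 -> 0 <= Psi r x.
Proof.
  intros Hr Hx; unfold Psi; pose proof (gammar_pos r Hr).
  assert (1 <= sqrt (1 + gammar r * (1 - x ^ 2))) by (apply one_le_sqrt_1_plus; nra); lra.
Qed.

(* The relay-destination rate reaches the target once [u] exceeds the positive root of
   [(1 - C^2) u^2 + 2 w u - g w^2]. *)
Lemma rd_snr_ge (g C u w : R) : 0 <= g -> 0 <= C < 1 -> 0 < w ->
  w * ((sqrt (1 + g * (1 - C ^ 2)) - 1) / (1 - C ^ 2)) <= u ->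
  (1 + g) * w ^ 2 <= (u + w) ^ 2 - (u * C) ^ 2.
Proof.
  intros Hg HC Hw Hu.
  set (e := 1 - C ^ 2) in *; assert (He : 0 < e) by (unfold e; nra).
  set (s := sqrt (1 + g * e)) in *.
  assert (Hs2 : s * s = 1 + g * e) by (apply sqrt_sqrt; nra).
  assert (Hs1 : 1 <= s) by (apply one_le_sqrt_1_plus; nra).
  assert (Hws : w * s <= e * u + w).
  { replace (w * s) with (e * (w * ((s - 1) / e)) + w) by (field; lra).
    apply Rplus_le_compat_r, Rmult_le_compat_l; lra. }
  assert (Hsq : (w * s) * (w * s) <= (e * u + w) * (e * u + w)) by (apply Rmult_le_compat; nra).
  apply (Rmult_le_reg_l e); [exact He |]; unfold e in *; nra.
Qed.

Definition rd_ratio (r C : R) : R := Psi r C / (1 - C ^ 2).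

Lemma rd_ratio_nonneg (r C : R) : 0 < r -> 0 <= C < 1 -> 0 <= rd_ratio r C.
Proof. intros Hr HC; apply div_nonneg; [apply Psi_nonneg |]; nra. Qed.

Lemma le_R_rd (r Ps Pr Cx grd gsd : R) : 0 < r -> 0 <= Cx < 1 -> 0 <= Ps * gsd ->
  (Ps * gsd + 1) * rd_ratio r Cx <= Pr * grd -> r <= R_rd Ps Pr Cx grd gsd.
Proof.
  intros Hr HC Hsd Hrd; unfold R_rd; apply le_half_log2_div; [nra |].
  rewrite Rpower_2_gammar; replace (Pr * grd + Ps * gsd + 1) with (Pr * grd + (Ps * gsd + 1)) by ring.
  apply rd_snr_ge; [left; now apply gammar_pos | exact HC | lra | exact Hrd].
Qed.

Lemma sqrt_le_of_le_sq (x y : R) : 0 <= y -> x <= y * y -> sqrt x <= y.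
Proof. intros Hy Hxy; rewrite <- (sqrt_square y Hy); now apply sqrt_le_1_alt. Qed.

(* The source-relay rate reaches the target iff [s >= sqrt (sr_quad g C v) - v - 1],
   where [s] and [v] are the received source and relay (self-interference) powers. *)
Definition sr_quad (g C v : R) : R := (1 + g) * (v + 1) ^ 2 - g * (C * v) ^ 2.

(* [sqrt (sr_quad g C v)] is concave in [v] (its quadratic has real roots), so it lies below
   its tangent [(A + 1) + (B + 1) v] at [v0]. *)
Definition sr_tangent_A (g C v0 : R) : R := (1 + g) * (v0 + 1) / sqrt (sr_quad g C v0) - 1.
Definition sr_tangent_B (g C v0 : R) : R :=
  ((1 + g - g * C ^ 2) * v0 + (1 + g)) / sqrt (sr_quad g C v0) - 1.

Section SourceRelayTangent.

Variables (g C v0 : R).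
Hypotheses (Hg : 0 <= g) (HC : 0 <= C < 1) (Hv0 : 0 <= v0).

Let s0 := sqrt (sr_quad g C v0).

Lemma sr_quad_ge (v : R) : 0 <= v -> (v + 1) ^ 2 <= sr_quad g C v.
Proof.
  intros Hv; unfold sr_quad.
  assert (HCv0 : 0 <= C * v) by nra; assert (HCv1 : C * v <= v + 1) by nra.
  assert (HCv : (C * v) ^ 2 <= (v + 1) ^ 2) by nra.
  assert (0 <= g * ((v + 1) ^ 2 - (C * v) ^ 2)) by (apply Rmult_le_pos; lra); nra.
Qed.

Lemma sr_root_pos : 0 < s0.
Proof. apply sqrt_lt_R0; pose proof (sr_quad_ge v0 Hv0); nra. Qed.

Lemma sr_root_sq : s0 * s0 = sr_quad g C v0.
Proof. apply sqrt_sqrt; pose proof (sr_quad_ge v0 Hv0); nra. Qed.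

Lemma one_le_sr_slope : 1 <= 1 + g - g * C ^ 2.
Proof. assert (0 <= g * (1 - C ^ 2)) by (apply Rmult_le_pos; nra); lra. Qed.

Lemma sr_tangent_A_nonneg : 0 <= sr_tangent_A g C v0.
Proof.
  pose proof sr_root_pos as Hs0; unfold sr_tangent_A; fold s0.
  assert (Hle : s0 <= (1 + g) * (v0 + 1)).
  { apply sqrt_le_of_le_sq; [nra |]; unfold sr_quad.
    assert (0 <= g * (1 + g) * (v0 + 1) ^ 2) by (apply Rmult_le_pos; [nra | apply pow2_ge_0]).
    assert (0 <= g * (C * v0) ^ 2) by (apply Rmult_le_pos; [lra | apply pow2_ge_0]); nra. }
  replace ((1 + g) * (v0 + 1) / s0 - 1) with (((1 + g) * (v0 + 1) - s0) / s0) by (field; lra).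
  apply div_nonneg; lra.
Qed.

Lemma sr_tangent_B_nonneg : 0 <= sr_tangent_B g C v0.
Proof.
  pose proof sr_root_pos as Hs0; unfold sr_tangent_B; fold s0.
  set (a := 1 + g - g * C ^ 2).
  assert (Ha : 1 <= a) by apply one_le_sr_slope.
  assert (Hle : s0 <= a * v0 + (1 + g)).
  { apply sqrt_le_of_le_sq; [nra |].
    assert (Hgap : (a * v0 + (1 + g)) * (a * v0 + (1 + g)) - sr_quad g C v0
      = a * (a - 1) * v0 ^ 2 + 2 * (1 + g) * (a - 1) * v0 + (1 + g) * g)
      by (unfold a, sr_quad; ring).
    assert (0 <= a * (a - 1) * v0 ^ 2) by (apply Rmult_le_pos; [nra | apply pow2_ge_0]).
    assert (0 <= 2 * (1 + g) * (a - 1) * v0) by (repeat apply Rmult_le_pos; lra).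
    assert (0 <= (1 + g) * g) by nra; lra. }
  replace ((a * v0 + (1 + g)) / s0 - 1) with ((a * v0 + (1 + g) - s0) / s0) by (field; lra).
  apply div_nonneg; lra.
Qed.

Lemma sr_tangent_at : sr_tangent_A g C v0 + sr_tangent_B g C v0 * v0 = s0 - v0 - 1.
Proof.
  pose proof sr_root_pos; pose proof sr_root_sq as Hsq.
  unfold sr_tangent_A, sr_tangent_B; fold s0.
  replace (s0 - v0 - 1) with (s0 * s0 / s0 - v0 - 1) by (field; lra).
  rewrite Hsq; unfold sr_quad; field; lra.
Qed.

Lemma sr_tangent_sound (v s : R) : 0 <= v ->
  sr_tangent_A g C v0 + sr_tangent_B g C v0 * v <= s ->
  (1 + g) * ((v + 1) ^ 2 - (v * C) ^ 2) <= (s + v + 1) ^ 2 - (v * C) ^ 2.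
Proof.
  intros Hv Hs; pose proof sr_root_pos; pose proof sr_root_sq as Hsq.
  set (T := ((1 + g) * (v0 + 1) + ((1 + g - g * C ^ 2) * v0 + (1 + g)) * v) / s0).
  assert (HT : sr_tangent_A g C v0 + sr_tangent_B g C v0 * v + v + 1 = T)
    by (unfold sr_tangent_A, sr_tangent_B, T; fold s0; field; lra).
  assert (HT0 : 0 <= T).
  { pose proof one_le_sr_slope; unfold T; apply Rmult_le_pos; [| left; now apply Rinv_0_lt_compat].
    assert (0 <= ((1 + g - g * C ^ 2) * v0 + (1 + g)) * v) by (apply Rmult_le_pos; nra); nra. }
  assert (Hgap : (T * s0) * (T * s0) - sr_quad g C v * (s0 * s0) = (v - v0) ^ 2 * (1 + g) * g * C ^ 2).
  { replace (T * s0) with ((1 + g) * (v0 + 1) + ((1 + g - g * C ^ 2) * v0 + (1 + g)) * v)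
      by (unfold T; field; lra).
    rewrite Hsq; unfold sr_quad; ring. }
  assert (HTQ : sr_quad g C v <= T * T).
  { apply (Rmult_le_reg_r (s0 * s0)); [nra |].
    pose proof (pow2_ge_0 (v - v0)); pose proof (pow2_ge_0 C).
    assert (0 <= (v - v0) ^ 2 * (1 + g) * g * C ^ 2)
      by (apply Rmult_le_pos; [apply Rmult_le_pos; [apply Rmult_le_pos |] |]; lra).
    replace (T * T * (s0 * s0)) with ((T * s0) * (T * s0)) by ring; lra. }
  assert (T * T <= (s + v + 1) * (s + v + 1)) by (apply Rmult_le_compat; lra).
  unfold sr_quad in HTQ; nra.
Qed.

End SourceRelayTangent.

Lemma sr_root_Psi (r C v0 : R) : 0 <= v0 ->
  sqrt (sr_quad (gammar r) C v0) - v0 - 1 = (v0 + 1) * Psi r (v0 / (v0 + 1) * C).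
Proof.
  intros Hv0; unfold Psi.
  replace (sr_quad (gammar r) C v0)
    with ((v0 + 1) * (v0 + 1) * (1 + gammar r * (1 - (v0 / (v0 + 1) * C) ^ 2)))
    by (unfold sr_quad; field; lra).
  rewrite sqrt_mult_alt, sqrt_square by nra; ring.
Qed.

Lemma le_R_sr (r Ps Pr Cx gsr grr v0 : R) : 0 < r -> 0 <= Cx < 1 -> 0 <= v0 -> 0 <= Pr * grr ->
  sr_tangent_A (gammar r) Cx v0 + sr_tangent_B (gammar r) Cx v0 * (Pr * grr) <= Ps * gsr ->
  r <= R_sr Ps Pr Cx gsr grr.
Proof.
  intros Hr HC Hv0 Hv Hs; unfold R_sr; apply le_half_log2_div.
  - assert (0 <= Pr * grr * Cx <= Pr * grr) by (split; nra); nra.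
  - rewrite Rpower_2_gammar.
    apply (sr_tangent_sound (gammar r) Cx v0);
      [left; now apply gammar_pos | exact HC | exact Hv0 | exact Hv | exact Hs].
Qed.

(** * The outage bound *)

Ltac solve_random_variable :=
  repeat first
    [ assumption | apply random_variable_const | apply random_variable_plus
    | apply random_variable_opp | apply random_variable_mult | apply random_variable_inv
    | apply random_variable_pow | apply random_variable_ln ].

Lemma meas_outage (Ω : prob_space) (Ps Pr Cx r : R) (gsr grr grd gsd : Ω -> R) :
  random_variable Ω gsr -> random_variable Ω grr -> random_variable Ω grd -> random_variable Ω gsd ->
  ps_meas Ω (fun w => Rmin (R_sr Ps Pr Cx (gsr w) (grr w)) (R_rd Ps Pr Cx (grd w) (gsd w)) < r).
Proof.
  intros Hsr Hrr Hrd Hsd.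
  apply (meas_ext Ω (fun w => R_sr Ps Pr Cx (gsr w) (grr w) < r \/ R_rd Ps Pr Cx (grd w) (gsd w) < r)).
  - intro w; unfold Rmin; destruct (Rle_dec _ _); lra.
  - apply meas_or; apply meas_rv_lt; unfold R_sr, R_rd, log2; solve_random_variable.
Qed.

Lemma le_min_rates_of_thresholds (r Ps Pr Cx v0 gsr grr grd gsd : R) :
  0 < r -> 0 < Ps -> 0 < Pr -> 0 <= Cx < 1 -> 0 <= v0 ->
  0 <= grr -> sr_tangent_A (gammar r) Cx v0 / Ps + sr_tangent_B (gammar r) Cx v0 * Pr / Ps * grr < gsr ->
  0 <= gsd -> rd_ratio r Cx / Pr + Ps * rd_ratio r Cx / Pr * gsd < grd ->
  r <= Rmin (R_sr Ps Pr Cx gsr grr) (R_rd Ps Pr Cx grd gsd).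
Proof.
  intros Hr HPs HPr HC Hv0 Hrr Hsr Hsd Hrd; apply Rmin_glb.
  - apply (le_R_sr r Ps Pr Cx _ _ v0 Hr HC Hv0); [nra |].
    apply (Rmult_lt_compat_l Ps) in Hsr; [| exact HPs].
    set (A := sr_tangent_A (gammar r) Cx v0) in *; set (B := sr_tangent_B (gammar r) Cx v0) in *.
    replace (Ps * (A / Ps + B * Pr / Ps * grr)) with (A + B * (Pr * grr)) in Hsr by (field; lra); lra.
  - apply le_R_rd; [exact Hr | exact HC | nra |].
    apply (Rmult_lt_compat_l Pr) in Hrd; [| exact HPr].
    set (k := rd_ratio r Cx) in *.
    replace (Pr * (k / Pr + Ps * k / Pr * gsd)) with ((Ps * gsd + 1) * k) in Hrd by (field; lra); lra.
Qed.

(* Jensen's inequality for the convex function [exp]. *)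
Lemma exp_laplace_ge_exp (m α β : R) : 0 < m -> 0 <= β -> exp (- (α + β * m)) <= exp_laplace m α β.
Proof.
  intros Hm Hβ; unfold exp_laplace.
  rewrite Ropp_plus_distr, exp_plus; unfold Rdiv; apply Rmult_le_compat_l; [left; apply exp_pos |].
  assert (Hpos : 0 < 1 + β * m) by nra.
  apply (Rmult_le_reg_r (1 + β * m)); [exact Hpos |]; rewrite Rinv_l by lra; apply exp_neg_mul_le.
Qed.

(* Tangency at the mean [v0 = Pr pirr] of the relay power turns Jensen's bound into the
   exponent of [P_UB_RF]. *)
Lemma sr_exp_laplace_ge (r Ps Pr Cx pisr pirr : R) :
  0 < r -> 0 < Ps -> 0 < Pr -> 0 < pisr -> 0 < pirr -> 0 <= Cx < 1 ->
  exp (- ((Pr * pirr + 1) / (Ps * pisr) * Psi r (alpha Pr pirr * Cx)))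
  <= exp_laplace pirr (sr_tangent_A (gammar r) Cx (Pr * pirr) / Ps / pisr)
                      (sr_tangent_B (gammar r) Cx (Pr * pirr) * Pr / Ps / pisr).
Proof.
  intros Hr HPs HPr Hsr Hrr HC.
  set (v0 := Pr * pirr); assert (Hv0 : 0 <= v0) by (unfold v0; nra).
  assert (Hg : 0 <= gammar r) by (left; now apply gammar_pos).
  pose proof (sr_tangent_B_nonneg _ _ _ Hg HC Hv0) as HB.
  replace ((v0 + 1) / (Ps * pisr) * Psi r (alpha Pr pirr * Cx))
    with (sr_tangent_A (gammar r) Cx v0 / Ps / pisr + sr_tangent_B (gammar r) Cx v0 * Pr / Ps / pisr * pirr).
  - apply exp_laplace_ge_exp; [exact Hrr |].
    apply div_nonneg; [apply div_nonneg; [apply Rmult_le_pos |] |]; lra.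
  - unfold alpha; fold v0.
    replace ((v0 + 1) / (Ps * pisr) * Psi r (v0 / (v0 + 1) * Cx))
      with ((v0 + 1) * Psi r (v0 / (v0 + 1) * Cx) / (Ps * pisr)) by (field; lra).
    rewrite <- sr_root_Psi, <- sr_tangent_at by assumption.
    unfold v0; field; lra.
Qed.

Lemma P_UB_RF_eq (Ps Pr Cx r pisr pirr pird pisd : R) : 0 < Pr -> 0 < pird -> 0 <= Cx < 1 ->
  P_UB_RF Ps Pr Cx r pisr pirr pird pisd =
  1 - exp (- ((Pr * pirr + 1) / (Ps * pisr) * Psi r (alpha Pr pirr * Cx))) *
      exp_laplace pisd (rd_ratio r Cx / Pr / pird) (Ps * rd_ratio r Cx / Pr / pird).
Proof.
  intros HPr Hrd HC; unfold P_UB_RF, exp_laplace, rd_ratio.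
  set (a := Psi r Cx / (Pr * pird * (1 - Cx ^ 2))).
  replace (Psi r Cx / (1 - Cx ^ 2) / Pr / pird) with a by (unfold a; field; nra).
  replace (Ps * (Psi r Cx / (1 - Cx ^ 2)) / Pr / pird) with (Ps * a) by (unfold a; field; nra).
  replace (1 + Ps * a * pisd) with (Ps * pisd * a + 1) by ring.
  rewrite Ropp_plus_distr, exp_plus; unfold Rdiv; ring.
Qed.

Theorem theorem4 (S : prob_space) (Ps pisr pirr pird pisd : R)
  (gsr grr grd gsd : S -> R)
  (hPs : 0 < Ps) (hsr : 0 < pisr) (hrr : 0 < pirr) (hrd : 0 < pird) (hsd : 0 < pisd)
  (Hsr : exponential_rv S pisr gsr) (Hrr : exponential_rv S pirr grr)
  (Hrd : exponential_rv S pird grd) (Hsd : exponential_rv S pisd gsd)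
  (Hind : mutually_independent4 S gsr grr grd gsd) :
  forall (r Pr Cx : R), 0 < r -> 0 < Pr -> 0 <= Cx < 1 ->
    P_EE S Ps Pr Cx r gsr grr grd gsd <= P_UB_RF Ps Pr Cx r pisr pirr pird pisd.
Proof.
  intros r Pr Cx Hr HPr HC.
  set (v0 := Pr * pirr); assert (Hv0 : 0 <= v0) by (unfold v0; nra).
  assert (Hg : 0 <= gammar r) by (left; now apply gammar_pos).
  set (A := sr_tangent_A (gammar r) Cx v0); set (B := sr_tangent_B (gammar r) Cx v0).
  set (k := rd_ratio r Cx).
  assert (HA : 0 <= A) by now apply sr_tangent_A_nonneg.
  assert (HB : 0 <= B) by now apply sr_tangent_B_nonneg.
  assert (Hk : 0 <= k) by now apply rd_ratio_nonneg.
  pose proof (P_exponential_thresholds_ge S gsr grr grd gsd pisr pirr pird pisd hsr hrr hrd hsd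
    Hsr Hrr Hrd Hsd Hind (A / Ps) (B * Pr / Ps) (k / Pr) (Ps * k / Pr)
    ltac:(apply div_nonneg; lra) ltac:(apply div_nonneg; [apply Rmult_le_pos |]; lra)
    ltac:(apply div_nonneg; lra) ltac:(apply div_nonneg; [apply Rmult_le_pos |]; lra)) as Hinner.
  set (E := fun w => _) in Hinner.
  assert (HE : ps_meas S E)
    by (apply meas_and; apply meas_linear_threshold; apply Hsr || apply Hrr || apply Hrd || apply Hsd).
  assert (Houter : P_EE S Ps Pr Cx r gsr grr grd gsd <= 1 - ps_P S E).
  { unfold P_EE; rewrite <- P_compl by exact HE; apply P_mono;
      [apply meas_outage; apply Hsr || apply Hrr || apply Hrd || apply Hsd | now apply meas_not |].
    intros w Hlt [[Hrr0 Hsr1] [Hsd0 Hrd1]]; apply (Rlt_not_le _ _ Hlt).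
    now apply (le_min_rates_of_thresholds r Ps Pr Cx v0). }
  pose proof (sr_exp_laplace_ge r Ps Pr Cx pisr pirr Hr hPs HPr hsr hrr HC) as HK1.
  assert (HK2 : 0 <= exp_laplace pisd (k / Pr / pird) (Ps * k / Pr / pird)).
  { apply exp_laplace_nonneg; [exact hsd |].
    apply div_nonneg; [apply div_nonneg; [apply Rmult_le_pos |] |]; lra. }
  rewrite P_UB_RF_eq by assumption; fold v0 A B k in HK1 |- *.
  pose proof (Rmult_le_compat_r _ _ _ HK2 HK1); lra.
Qed.
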